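(* Let $d\ge 1$ and $n\ge 1$ be integers. Let $v_1,\ldots,v_n\in\mathbb{R}^d$ be non-zero vectors with $\|v_i\|_2\le 1$ for all $i$, let $\varepsilon_1,\ldots,\varepsilon_n$ be independent Rademacher random variables, and set $S_n=v_1\varepsilon_1+\cdots+v_n\varepsilon_n$. Let $R_n=\varepsilon_1+\cdots+\varepsilon_n$. Then for every non-zero $x\in\mathbb{R}^d$, $$\mathbb{P}(S_n=x)\le \mathbb{P}(R_n=k+\delta_{n,k})=\binom{n}{\lceil \frac{n+k}{2}\rceil}\Big/2^n,$$ where $k=\lceil \|x\|_2\rceil$ is the upper integer part of $\|x\|_2$.
   Context: A Rademacher random variable $\varepsilon$ satisfies $\mathbb{P}(\varepsilon=1)=\mathbb{P}(\varepsilon=-1)=\tfrac12$. For integers $n,k$, $\delta_{n,k}$ is defined to be $0$ if $n+k$ is even and $1$ otherwise. *)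

From mathcomp Require Import all_boot all_order all_algebra.
From mathcomp Require Import reals.
Set Implicit Arguments. Unset Strict Implicit. Unset Printing Implicit Defensive.
Import Order.TTheory GRing.Theory Num.Theory.
Local Open Scope ring_scope.

Section Defs.
Variable R : realType.

Definition enorm (d : nat) (x : 'rV[R]_d) : R :=
  Num.sqrt (\sum_(j < d) x 0 j ^+ 2).

Definition rad (b : bool) : R := if b then 1 else -1.

(* The sample space of n independent Rademacher variables is the finite set
   {ffun 'I_n -> bool} with the uniform (product) probability. *)
Definition prob (n : nat) (E : pred {ffun 'I_n -> bool}) : R :=
  #|E|%:R / 2 ^+ n.

Definition Sn (d n : nat) (v : 'I_n -> 'rV[R]_d) (e : {ffun 'I_n -> bool}) : 'rV[R]_d :=
  \sum_(i < n) rad (e i) *: v i.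

Definition Rn (n : nat) (e : {ffun 'I_n -> bool}) : R :=
  \sum_(i < n) rad (e i).
End Defs.

Definition delta (n k : nat) : nat := odd (n + k).

From Pilot Require Import Defs.
From mathcomp Require Import all_boot all_order all_algebra.
From mathcomp Require Import reals zify ring lra.
Set Implicit Arguments. Unset Strict Implicit. Unset Printing Implicit Defensive.
Import Order.TTheory GRing.Theory Num.Theory.
Local Open Scope ring_scope.

(* Project onto a direction w with <v_i, w> <> 0 for all i: if S_n = x then
   the scalar signed sum  sum_i eps_i <v_i, w>  equals <x, w>.  Taking
   w = x + (t, t^2, ..., t^d) with t > 0 small keeps every <v_i, w> nonzero
   (each is a nonzero polynomial in t), bounds |<v_i, w>| by c ~ |x| and makes
   <x, w> ~ |x|^2 > (k - 1) c, because k - 1 < |x|.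
   In dimension one, #{eps : sum_i eps_i a_i = X} <= C(n, ceil((n + k)/2))
   for nonzero |a_i| <= c and |X| > (k - 1) c, by induction on n: fix the sign
   of the a_i of largest modulus b; one of X - a_i, X + a_i has modulus
   |X| + b > k b, the other has modulus > (k - 2) b, and Pascal's rule adds up
   the two bounds.  Finally R_n = k + delta_{n,k} iff exactly
   ceil((n + k)/2) of the signs are +1. *)

Lemma binS_uphalf n k :
  ('C(n, uphalf (n + k.+1)) + 'C(n, uphalf (n + k.-1)))%N =
  'C(n.+1, uphalf (n.+1 + k)).
Proof.
case: k => [|k]; last by rewrite addSn !addnS /= binS.
rewrite !addn0 addn1 /= binS; congr addn.
(* for odd n this is the symmetry C(n, m) = C(n, n - m) *)
rewrite uphalf_half; have := odd_double_half n.
case: (odd n) => /= hn //; rewrite -[in RHS](@bin_sub n n./2); last lia.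
congr 'C(_, _); lia.
Qed.

Lemma normrB_or_normrD_eq (R : realDomainType) (X b : R) :
  `|X - b| = `|X| + `|b| \/ `|X + b| = `|X| + `|b|.
Proof.
have [X_ge0|X_lt0] := lerP 0 X; have [b_ge0|b_lt0] := lerP 0 b.
- by right; rewrite !ger0_norm ?addr_ge0.
- left; rewrite (ger0_norm X_ge0) (ltr0_norm b_lt0) ger0_norm //.
  by rewrite subr_ge0 ltW // (lt_le_trans b_lt0).
- left; rewrite (ltr0_norm X_lt0) (ger0_norm b_ge0) ltr0_norm ?opprD ?opprK //.
  by rewrite subr_lt0 (lt_le_trans X_lt0).
- right; rewrite (ltr0_norm X_lt0) (ltr0_norm b_lt0) ltr0_norm ?opprD //.
  by rewrite -(addr0 0) ltrD.
Qed.

Lemma poly_nonroot_near0 (R : realFieldType) (q : {poly R}) (t0 : R) :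
  q != 0 -> 0 < t0 -> exists2 t, 0 < t <= t0 & ~~ root q t.
Proof.
move=> q_neq0 t0_gt0.
pose s := [seq t0 / i.+1%:R | i <- iota 0 (size q)].
have s_uniq : uniq s.
  rewrite map_inj_in_uniq ?iota_uniq // => i j _ _ /(mulfI (lt0r_neq0 t0_gt0)).
  by move/invr_inj/eqP; rewrite eqr_nat => /eqP [].
have [all_roots|/allPn [_ /mapP [i _ ->] not_root]] := boolP (all (root q) s).
  by have := max_poly_roots q_neq0 all_roots s_uniq; rewrite size_map size_iota ltnn.
exists (t0 / i.+1%:R) => //; rewrite divr_gt0 ?ltr0n //=.
by rewrite ler_pdivrMr ?ltr0n // ler_peMr ?ler1n // ltW.
Qed.

Section Dot.
Variables (R : realFieldType) (d : nat).
Implicit Types (u w y : 'rV[R]_d) (t : R).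

Definition dot u w : R := \sum_j u 0 j * w 0 j.
Definition sqnorm u : R := \sum_j u 0 j ^+ 2.
Definition moment t : 'rV[R]_d := \row_j t ^+ j.+1.

Lemma dotDr u w y : dot u (w + y) = dot u w + dot u y.
Proof. by rewrite /dot -big_split; apply: eq_bigr => j _; rewrite mxE mulrDr. Qed.

Lemma dot_suml n (a : 'I_n -> R) (v : 'I_n -> 'rV[R]_d) w :
  dot (\sum_i a i *: v i) w = \sum_i a i * dot (v i) w.
Proof.
rewrite /dot; under eq_bigr => j _ do rewrite summxE mulr_suml.
rewrite exchange_big; apply: eq_bigr => i _; rewrite mulr_sumr.
by apply: eq_bigr => j _; rewrite mxE mulrA.
Qed.

Lemma dot_self u : dot u u = sqnorm u.
Proof. by apply: eq_bigr => j _; rewrite expr2. Qed.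

Lemma sqr_entry_le_sqnorm u j : u 0 j ^+ 2 <= sqnorm u.
Proof. by rewrite /sqnorm (bigD1 j) //= lerDl sumr_ge0 // => i _; rewrite sqr_ge0. Qed.

Lemma normr_dot_le_amgm (r : R) u y :
  0 < r -> `|dot u y| <= (r * sqnorm u + sqnorm y / r) / 2.
Proof.
move=> r_gt0.
have dot_le u' : dot u' y <= (r * sqnorm u' + sqnorm y / r) / 2.
  rewrite /dot /sqnorm mulr_sumr mulr_suml -big_split mulr_suml /=.
  apply: ler_sum => j _.
  have -> : (r * u' 0 j ^+ 2 + y 0 j ^+ 2 / r) / 2 =
            u' 0 j * y 0 j + (r * u' 0 j - y 0 j) ^+ 2 / (2 * r).
    by field; rewrite gt_eqF.
  by rewrite lerDl divr_ge0 ?sqr_ge0 ?mulr_ge0 ?ltW.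
rewrite ler_norml dot_le andbT lerNl.
have := dot_le (- u); congr (_ <= (_ * _ + _) / _).
  by rewrite /dot -sumrN; apply: eq_bigr => j _; rewrite mxE mulNr.
by apply: eq_bigr => j _; rewrite mxE sqrrN.
Qed.

Lemma normr_dot_moment_le u (B t : R) :
  0 <= t <= 1 -> (forall j, `|u 0 j| <= B) -> `|dot u (moment t)| <= d%:R * B * t.
Proof.
move=> /andP[t_ge0 t_le1] u_le; apply: le_trans (ler_norm_sum _ _ _) _.
rewrite -mulrA mulr_natl -[d in _ *+ d]card_ord -sumr_const.
apply: ler_sum => j _; rewrite mxE normrM normrX (ger0_norm t_ge0) exprSr mulrA.
rewrite ler_wpM2r // (le_trans _ (u_le j)) // ler_piMr ?exprn_ile1 //.
Qed.

(* [dot (v i) (x + moment t)] is the polynomial in [t] with coefficients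
   [dot (v i) x] and the entries of [v i], hence nonzero. *)
Lemma moment_avoids_hyperplanes n (v : 'I_n -> 'rV[R]_d) x (t0 : R) :
  (forall i, v i != 0) -> 0 < t0 ->
  exists2 t, 0 < t <= t0 & forall i, dot (v i) (x + moment t) != 0.
Proof.
move=> v_neq0 t0_gt0.
pose q i := Poly (dot (v i) x :: [seq v i 0 j | j <- enum 'I_d]).
have coef_q i (j : 'I_d) : (q i)`_j.+1 = v i 0 j.
  by rewrite coef_Poly /= (nth_map j) ?size_enum_ord ?nth_ord_enum.
have hornerE i t : (q i).[t] = dot (v i) (x + moment t).
  rewrite (@horner_coef_wide _ d.+1); last first.
    by rewrite (leq_trans (size_Poly _)) //= size_map size_enum_ord.
  rewrite big_ord_recl coef_Poly /= expr0 mulr1 dotDr; congr (_ + _).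
  by apply: eq_bigr => j _; rewrite coef_q mxE.
have q_neq0 i : q i != 0.
  apply: contraNneq (v_neq0 i) => qi0; apply/eqP/rowP => j.
  by rewrite mxE -coef_q qi0 coef0.
have prod_q_neq0 : \prod_i q i != 0 by apply/prodf_neq0 => i _.
have [t t_in] := poly_nonroot_near0 prod_q_neq0 t0_gt0.
rewrite /root horner_prod => /prodf_neq0 q_t.
by exists t => // i; rewrite -hornerE q_t.
Qed.

End Dot.

Arguments moment {R d} t.

Lemma card_ffun_draws n u :
  #|[pred e : {ffun 'I_n -> bool} | #|[set i | e i]| == u]| = 'C(n, u).
Proof.
rewrite -[in RHS](card_ord n) -card_draws -!sum1_card.
rewrite (reindex (fun A : {set 'I_n} => [ffun i => i \in A])) /=; last first.
  exists (fun e : {ffun 'I_n -> bool} => [set i | e i]) => [A _|e _].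
    by apply/setP => i; rewrite inE ffunE.
  by apply/ffunP => i; rewrite ffunE inE.
apply: eq_bigl => A; rewrite !inE; congr (_ == _); apply: eq_card => i.
by rewrite !inE ffunE.
Qed.

Section SignedSums.
Variable R : realType.
Local Notation rad := (@Pilot.Defs.rad R).

Definition signed_count n (a : 'I_n -> R) (X : R) : nat :=
  #|[pred e : {ffun 'I_n -> bool} | \sum_i rad (e i) * a i == X]|.

Lemma signed_count_lift n (i0 : 'I_n.+1) (a : 'I_n.+1 -> R) (X : R) :
  signed_count a X =
  (signed_count (fun j => a (lift i0 j)) (X - a i0) +
   signed_count (fun j => a (lift i0 j)) (X + a i0))%N.
Proof.
pose ext (b : bool) (f : {ffun 'I_n -> bool}) : {ffun 'I_n.+1 -> bool} :=
  [ffun i => if unlift i0 i is Some j then f j else b].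
have sum_ext b f : \sum_i rad (ext b f i) * a i =
    rad b * a i0 + \sum_j rad (f j) * a (lift i0 j).
  rewrite (bigD1_ord i0) //= ffunE unlift_none; congr (_ + _).
  by apply: eq_bigr => j _; rewrite ffunE liftK.
rewrite /signed_count -!sum1_card.
rewrite (reindex (fun p => ext p.1 p.2)) /=; last first.
  exists (fun e => (e i0, [ffun j => e (lift i0 j)])) => [[b f] _|e _] /=.
    rewrite ffunE unlift_none; congr pair; apply/ffunP => j.
    by rewrite !ffunE liftK.
  by apply/ffunP => i; rewrite ffunE; case: unliftP => [j ->|->]; rewrite ?ffunE.
rewrite big_mkcond -(pair_bigA _ (fun b f => if ext b f \in _ then 1 else 0)%N).
rewrite big_bool /=; congr addn; rewrite [RHS]big_mkcond; apply: eq_bigr => f _;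
  rewrite !inE sum_ext /=; congr (if _ then _ else _).
  by rewrite mul1r addrC [RHS]eq_sym subr_eq eq_sym.
by rewrite mulN1r addrC subr_eq.
Qed.

Lemma signed_count_le_binomial n k (a : 'I_n -> R) (c X : R) :
  0 < c -> (forall i, a i != 0) -> (forall i, `|a i| <= c) ->
  (k%:R - 1) * c < `|X| -> (signed_count a X <= 'C(n, uphalf (n + k)))%N.
Proof.
elim: n k a c X => [|n IH] k a c X c_gt0 a_neq0 a_le X_gt.
  case: k X_gt => [_|k X_gt].
    by rewrite (leq_trans (max_card _)) // card_ffun !card_ord.
  rewrite leqn0; apply/eqP/eq_card0 => e; rewrite !inE big_ord0.
  apply/negbTE; rewrite eq_sym -normr_gt0 (le_lt_trans _ X_gt) //.
  by rewrite mulr_ge0 ?(ltW c_gt0) // subr_ge0 ler1n.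
case: (arg_maxP (i0 := ord0) (P := xpredT) (fun i => `|a i|) isT) => i0 _ a_max.
set b := `|a i0| in a_max.
have b_gt0 : 0 < b by rewrite normr_gt0.
have IHb k' Y : (k'%:R - 1) * b < `|Y| ->
    (signed_count (fun j => a (lift i0 j)) Y <= 'C(n, uphalf (n + k')))%N.
  exact: IH b_gt0 (fun j => a_neq0 _) (fun j => a_max _ isT).
have X_gtb : (k%:R - 1) * b < `|X|.
  case: k X_gt => [|k] X_gt.
    by rewrite sub0r mulN1r (lt_le_trans _ (normr_ge0 _)) ?oppr_lt0.
  by rewrite (le_lt_trans _ X_gt) // ler_wpM2l ?a_le // subr_ge0 ler1n.
have bound Y1 Y2 : `|Y1| = `|X| + b -> `|X| - b <= `|Y2| ->
    (signed_count (fun j => a (lift i0 j)) Y1 +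
     signed_count (fun j => a (lift i0 j)) Y2 <= 'C(n.+1, uphalf (n.+1 + k)))%N.
  move=> Y1E Y2_ge; rewrite -binS_uphalf leq_add //; apply: IHb.
    by rewrite Y1E -natr1 addrK -ltrBlDr -[Z in _ - Z]mul1r -mulrBl.
  case: k X_gtb {X_gt} => [|k] X_gtb.
    by rewrite sub0r mulN1r (lt_le_trans _ (normr_ge0 _)) ?oppr_lt0.
  move: X_gtb; rewrite -natr1 addrK => X_gtb.
  by rewrite (lt_le_trans _ Y2_ge) // ltrBrDr -[Z in _ + Z]mul1r -mulrDl subrK.
rewrite (signed_count_lift i0).
have [XbE|XbE] := normrB_or_normrD_eq X (a i0).
  exact: bound XbE (lerB_normD _ _).
by rewrite addnC; apply: bound XbE (lerB_dist _ _).
Qed.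

Lemma RnE n (e : {ffun 'I_n -> bool}) : Rn R e = (#|[set i | e i]|.*2)%:R - n%:R.
Proof.
rewrite -sum1_card big_mkcond -muln2 natrM natr_sum mulr_suml /Rn.
have -> : n%:R = \sum_(i < n) (1 : R) by rewrite sumr_const card_ord.
rewrite -sumrB; apply: eq_bigr => i _.
by rewrite inE; case: (e i) => /=; rewrite ?mul1r ?mul0r ?sub0r // -addrA subrr addr0.
Qed.

Lemma card_Rn_eq n k :
  #|[pred e : {ffun 'I_n -> bool} | Rn R e == (k + delta n k)%:R]| =
  'C(n, uphalf (n + k)).
Proof.
rewrite -card_ffun_draws; apply: eq_card => e.
rewrite !inE RnE subr_eq -natrD eqr_nat.
rewrite /delta uphalf_half; have := odd_double_half (n + k).
by case: (odd (n + k)) => /=; rewrite -!muln2 => nkE; apply/eqP/eqP; lia.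
Qed.
End SignedSums.

Section Euclidean.
Variables (R : realType) (d : nat).
Implicit Types (u x : 'rV[R]_d).

Lemma sqr_enorm u : enorm u ^+ 2 = sqnorm u.
Proof. by rewrite sqr_sqrtr // sumr_ge0 // => j _; rewrite sqr_ge0. Qed.

Lemma normr_entry_le_enorm u j : `|u 0 j| <= enorm u.
Proof.
rewrite -sqrtr_sqr ler_sqrt ?sqr_entry_le_sqnorm //.
by rewrite sumr_ge0 // => i _; rewrite sqr_ge0.
Qed.

Lemma enorm_gt0 x : x != 0 -> 0 < enorm x.
Proof.
move=> x_neq0; have [j x_j] : exists j, x 0 j != 0.
  apply/existsP; apply: contraNT x_neq0; rewrite negb_exists => /forallP x0.
  by apply/eqP/rowP => j; rewrite mxE; apply/eqP/negPn.
by rewrite (lt_le_trans _ (normr_entry_le_enorm x j)) ?normr_gt0.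
Qed.

Lemma exists_projection_direction n (v : 'I_n -> 'rV[R]_d) x (K : R) :
  (forall i, v i != 0) -> (forall i, enorm (v i) <= 1) -> 0 <= K -> K < enorm x ->
  exists w, exists2 c, 0 < c &
    [/\ forall i, dot (v i) w != 0, forall i, `|dot (v i) w| <= c
       & K * c < `|dot x w|].
Proof.
move=> v_neq0 v_le1 K_ge0 K_lt; set r := enorm x in K_lt.
have r_gt0 : 0 < r := le_lt_trans K_ge0 K_lt.
pose D : R := d%:R; have D_ge0 : 0 <= D := ler0n _ _.
have den_gt0 : 0 < D * (K + r) + 1.
  by have := mulr_ge0 D_ge0 (addr_ge0 K_ge0 (ltW r_gt0)); lra.
pose t_max := r * (r - K) / (D * (K + r) + 1).
have t_max_gt0 : 0 < t_max by rewrite divr_gt0 ?mulr_gt0 ?subr_gt0.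
have t0_gt0 : 0 < Num.min 1 t_max by rewrite lt_min ltr01.
have [t /andP[t_gt0 t_le] dot_neq0] := moment_avoids_hyperplanes x v_neq0 t0_gt0.
have [t_le1 t_le_max] : t <= 1 /\ t <= t_max by apply/andP; rewrite -le_min.
have t01 : 0 <= t <= 1 by rewrite ltW.
exists (x + moment t), (r + D * t).
  by have := mulr_ge0 D_ge0 (ltW t_gt0); lra.
split => [//|i|].
  rewrite dotDr (le_trans (ler_normD _ _)) // lerD //.
    rewrite (le_trans (normr_dot_le_amgm _ _ r_gt0)) // -!sqr_enorm.
    rewrite [r ^+ 2]expr2 mulfK ?gt_eqF // ler_pdivrMr // mulr2n mulrDr mulr1 lerD2r.
    by rewrite ler_piMr ?(ltW r_gt0) // expr_le1 ?sqrtr_ge0.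
  rewrite -[D]mulr1 normr_dot_moment_le // => j.
  exact: le_trans (normr_entry_le_enorm _ _) (v_le1 i).
have s_le : `|dot x (moment t)| <= D * r * t.
  exact: normr_dot_moment_le t01 (normr_entry_le_enorm x).
rewrite dotDr dot_self -sqr_enorm -/r (lt_le_trans _ (ler_norm _)) //.
move: s_le t_le_max; rewrite ler_norml ler_pdivlMr //.
move=> /andP[s_ge _] t_le_max; nra.
Qed.

Lemma card_Sn_le_binomial n k (v : 'I_n -> 'rV[R]_d) x :
  (forall i, v i != 0) -> (forall i, enorm (v i) <= 1) ->
  (0 < k)%N -> k%:R - 1 < enorm x ->
  (#|[pred e | Sn v e == x]| <= 'C(n, uphalf (n + k)))%N.
Proof.
move=> v_neq0 v_le1 k_gt0 k_lt.
have K_ge0 : 0 <= k%:R - 1 :> R by rewrite subr_ge0 ler1n.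
have [w [c c_gt0 [dot_neq0 dot_le c_lt]]] :=
  exists_projection_direction v_neq0 v_le1 K_ge0 k_lt.
apply: leq_trans (signed_count_le_binomial c_gt0 dot_neq0 dot_le c_lt).
apply/subset_leq_card/subsetP => e; rewrite !inE => /eqP <-.
by rewrite dot_suml.
Qed.
End Euclidean.

Lemma absz_ceil_gt0 (R : archiDomainType) (r : R) : 0 < r -> (0 < `|Num.ceil r|)%N.
Proof. by move=> r_gt0; rewrite absz_gt0 gt_eqF ?ceil_gt0. Qed.

Lemma natr_absz_ceil_sub1_lt (R : archiDomainType) (r : R) :
  0 <= r -> `|Num.ceil r|%N%:R - 1 < r.
Proof.
move=> r_ge0; have ceil_r_ge0 : 0 <= Num.ceil r.
  by rewrite ceil_ge0 (lt_le_trans _ r_ge0) ?ltrN10.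
by rewrite natr_absz ger0_norm // -[1]/(1%:~R) -intrB ceilB1_lt.
Qed.

Unset Implicit Arguments.

Theorem theorem2 (R : realType) (d n : nat) (hd : (1 <= d)%N) (hn : (1 <= n)%N)
  (v : 'I_n -> 'rV[R]_d)
  (hv0 : forall i, v i != 0) (hv1 : forall i, enorm (v i) <= 1)
  (x : 'rV[R]_d) (hx : x != 0) :
  let k : nat := `|Num.ceil (enorm x)|%N in
  prob R [pred e | Sn v e == x]
    <= prob R [pred e : {ffun 'I_n -> bool} | Rn R e == (k + delta n k)%:R]
  /\ prob R [pred e : {ffun 'I_n -> bool} | Rn R e == (k + delta n k)%:R]
     = 'C(n, uphalf (n + k))%:R / 2 ^+ n.
Proof.
move=> k; rewrite /prob card_Rn_eq; split => //.
have x_gt0 := enorm_gt0 hx.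
rewrite ler_wpM2r ?invr_ge0 ?exprn_ge0 // ler_nat card_Sn_le_binomial //.
  exact: absz_ceil_gt0.
exact: natr_absz_ceil_sub1_lt (ltW x_gt0).
Qed.
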